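(* For every admissible word $\omega$, $V_\omega=B_\omega\cap Z_\omega=\mathbb{Z}\{\delta^j_\omega: j\in X(\omega)\}$.
   Context: Let $[n]=\{1,\dots,n\}$, $e_1,\dots,e_n$ the standard basis of $\mathbb{Z}^n$. The alphabet is $L=\{1,\dots,n,1^\infty,\dots,n^\infty,\mathsf{ext}\}$ (each $j^\infty$ and $\mathsf{ext}$ is a single letter); $\varepsilon$ is the empty word, $*$ concatenation. A finite word $\omega$ over $L$ is admissible if: (i) whenever $j^\infty$ occurs, the subsequent part of $\omega$ contains neither $j$ nor $j^\infty$; (ii) the only letter allowed directly after $j^\infty$ is $\mathsf{ext}$; (iii) every $\mathsf{ext}$ occurs directly after some $j^\infty$. $X(\omega)$ is the set of $j$ such that $j^\infty\mathsf{ext}$ is a subword of $\omega$, and $Y(\omega)=[n]\setminus X(\omega)$. Define recursively $\delta^i_\omega\in\mathbb{Z}^n$: $\delta^i_\varepsilon=e_i$; $\delta^i_{\omega*j^\infty}=\delta^i_{\omega*\mathsf{ext}}=\delta^i_\omega$; $\delta^i_{\omega*j}=\delta^i_\omega$ if $i\in X(\omega)\cup\{j\}$ and $\delta^i_{\omega*j}=\delta^i_\omega-\delta^j_\omega$ if $i\in Y(\omega)\setminus\{j\}$. Define (Minkowski sums) $B_\varepsilon=\{0\}$, $B_{\omega*j}=B_\omega+\{0,\delta^j_\omega\}$, $B_{\omega*j^\infty}=B_\omega+\mathbb{Z}_{\ge0}\delta^j_\omega$, $B_{\omega*j^\infty*\mathsf{ext}}=B_\omega+\mathbb{Z}\delta^j_\omega$,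 and $Z_\omega=-B_\omega$. Define $V_\varepsilon=\{0\}$, $V_{\omega*j}=V_{\omega*j^\infty}=V_\omega$, $V_{\omega*j^\infty*\mathsf{ext}}=V_\omega+\mathbb{Z}\delta^j_\omega$. *)

(* Vectors of Z^n are row vectors 'rV[int]_n; subsets of Z^n
   are predicates 'rV[int]_n -> Prop. *)
From HB Require Import structures.
From mathcomp Require Import all_boot all_order all_algebra.
Set Implicit Arguments. Unset Strict Implicit. Unset Printing Implicit Defensive.
Import Order.TTheory GRing.Theory Num.Theory.
Local Open Scope ring_scope.

(* The alphabet L = {1..n, 1^oo..n^oo, ext}; indices are 'I_n = {0..n-1}. *)
Inductive letter (n : nat) : Type :=
  | Fin of 'I_n
  | Inf of 'I_n
  | Ext.
Arguments Ext {n}.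

Definition word n := seq (letter n).

Definition is_Fin n (j : 'I_n) (a : letter n) : bool :=
  if a is Fin k then k == j else false.
Definition is_Inf n (j : 'I_n) (a : letter n) : bool :=
  if a is Inf k then k == j else false.
Definition is_any_Inf n (a : letter n) : bool :=
  if a is Inf _ then true else false.
Definition is_Ext n (a : letter n) : bool :=
  if a is Ext then true else false.

Definition admissible n (w : word n) : Prop :=
  (forall (j : 'I_n) (p q : nat), (q < size w)%N -> (p < q)%N ->
      is_Inf j (nth Ext w p) ->
      ~~ is_Fin j (nth Ext w q) /\ ~~ is_Inf j (nth Ext w q)) /\
  (forall p : nat, (p.+1 < size w)%N -> is_any_Inf (nth Ext w p) ->
      is_Ext (nth Ext w p.+1)) /\
  (forall p : nat, (p < size w)%N -> is_Ext (nth Ext w p) ->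
      exists2 p', p = p'.+1 & is_any_Inf (nth Ext w p')).

Definition Xb n (w : word n) (j : 'I_n) : bool :=
  has (fun p => [&& (p.+1 < size w)%N, is_Inf j (nth Ext w p)
                 & is_Ext (nth Ext w p.+1)])
      (iota 0 (size w)).

(* delta, computed on the reversed word: delta_rev (rev w) i = delta^i_w *)
Fixpoint delta_rev n (r : word n) (i : 'I_n) : 'rV[int]_n :=
  match r with
  | [::] => delta_mx 0 i
  | Fin j :: r' =>
      if Xb (rev r') i || (i == j) then delta_rev r' i
      else delta_rev r' i - delta_rev r' j
  | _ :: r' => delta_rev r' i
  end.

Definition delta n (w : word n) (i : 'I_n) : 'rV[int]_n := delta_rev (rev w) i.

Definition vset n := 'rV[int]_n -> Prop.
Definition msum n (A B : vset n) : vset n :=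
  fun v => exists a b, A a /\ B b /\ v = a + b.
Definition set0v n : vset n := fun v => v = 0.
Definition seg01 n (d : 'rV[int]_n) : vset n := fun v => v = 0 \/ v = d.
Definition rayN n (d : 'rV[int]_n) : vset n :=
  fun v => exists k : nat, v = d *+ k.
Definition lineZ n (d : 'rV[int]_n) : vset n :=
  fun v => exists k : int, v = d *~ k.

(* B and V, computed on the reversed word. The clause "Ext :: r" with r not
   starting with some j^oo never arises for admissible words; we set it to
   leave the set unchanged. *)
Fixpoint B_rev n (r : word n) : vset n :=
  match r with
  | [::] => @set0v n
  | Fin j :: r' => msum (B_rev r') (seg01 (delta_rev r' j))
  | Inf j :: r' => msum (B_rev r') (rayN (delta_rev r' j))
  | Ext :: Inf j :: r' => msum (B_rev r') (lineZ (delta_rev r' j))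
  | Ext :: r' => B_rev r'
  end.

Fixpoint V_rev n (r : word n) : vset n :=
  match r with
  | [::] => @set0v n
  | Fin _ :: r' => V_rev r'
  | Inf _ :: r' => V_rev r'
  | Ext :: Inf j :: r' => msum (V_rev r') (lineZ (delta_rev r' j))
  | Ext :: r' => V_rev r'
  end.

Definition B n (w : word n) : vset n := B_rev (rev w).
Definition V n (w : word n) : vset n := V_rev (rev w).
Definition Zset n (w : word n) : vset n := fun v => B w (- v).

Definition spanX n (w : word n) : vset n :=
  fun v => exists c : 'I_n -> int,
    v = \sum_(j < n | Xb w j) delta w j *~ c j.

From HB Require Import structures.
From mathcomp Require Import all_boot all_order all_algebra.
Set Implicit Arguments. Unset Strict Implicit. Unset Printing Implicit Defensive.
Import Order.TTheory GRing.Theory Num.Theory.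
Local Open Scope ring_scope.

(* We read a word letter by letter from the left (appending
   letters with rcons) and maintain, besides the vectors delta^i_w, the integer
   linear forms phi^i_w giving the coordinates in the basis (delta^i_w)_i:
   v = sum_i phi^i_w(v) delta^i_w and phi^i_w(delta^k_w) = [i = k].  Appending a
   letter j replaces delta^i by delta^i - delta^j for i in Y(w) \ {j}; dually it
   adds sum_(l in Y(w) \ {j}) phi^l_w to phi^j_w.
   By induction on admissible words we establish the invariant [good w]:
   the two duality identities; B_w lies in the cone of vectors whose
   Y(w)-coordinates are nonnegative; V_w is the Z-span of {delta^j_w : j in X(w)};
   and this span is contained in B_w.  Admissibility is needed only for the
   letter ext: it always follows some j^oo, and then j is not yet in X, so that
   X grows by j while the cone loses exactly the constraint on phi^j.
   The theorem follows: the span is symmetric, hence lies in B_w and Z_w = -B_w;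
   conversely, for v in B_w and -v in B_w every Y-coordinate of v vanishes, so
   the expansion of v only involves the delta^j_w with j in X(w). *)

Section AdmissibleWords.
Variable n : nat.
Implicit Types (w r : word n) (u v : 'rV[int]_n).

Fixpoint phi_rev r (i : 'I_n) v : int :=
  match r with
  | [::] => v 0 i
  | Fin j :: r' => phi_rev r' i v + (i == j)%:R *
        \sum_(l < n | ~~ Xb (rev r') l && (l != j)) phi_rev r' l v
  | _ :: r' => phi_rev r' i v
  end.

Lemma phi_rev_is_zmod_morphism r i : zmod_morphism (phi_rev r i).
Proof.
elim: r i => [|a r IH] i u v /=; first by rewrite !mxE.
have IHuv l : phi_rev r l (u - v) = phi_rev r l u - phi_rev r l v by exact: IH.
case: a => [j|j|]; rewrite ?IHuv //.
by rewrite (eq_bigr _ (fun l _ => IHuv l)) sumrB mulrBr opprD addrACA.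
Qed.

HB.instance Definition _ r i :=
  GRing.isZmodMorphism.Build _ _ (phi_rev r i) (phi_rev_is_zmod_morphism r i).

Definition phi w i : {additive 'rV[int]_n -> int} := phi_rev (rev w) i.

Lemma XbP w j : reflect (exists p, [&& (p.+1 < size w)%N,
  is_Inf j (nth Ext w p) & is_Ext (nth Ext w p.+1)]) (Xb w j).
Proof.
apply: (iffP hasP) => [[p _ H]|[p H]]; first by exists p.
by exists p => //; rewrite mem_iota add0n; case/and3P: H => /ltnW.
Qed.

Lemma Xb_rcons w a j :
  Xb (rcons w a) j = Xb w j || (is_Ext a && is_Inf j (last Ext w)).
Proof.
apply/XbP/orP => [[p]|[/XbP[p /and3P[hp hi he]]|/andP[ha hl]]].
- rewrite size_rcons ltnS !nth_rcons => /and3P[hp]; rewrite hp.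
  case: ltnP => [hp' hi he|hp' hi]; first by left; apply/XbP; exists p; apply/and3P.
  have ep : p.+1 = size w by apply/eqP; rewrite eqn_leq hp.
  by rewrite ep eqxx => he; right; rewrite he -nth_last -ep.
- by exists p; rewrite size_rcons !nth_rcons hp (ltnW hp) hi he ltnS ltnW.
- case/lastP: w hl => [|s x] //; rewrite last_rcons => hl.
  exists (size s); rewrite !nth_rcons !size_rcons ltnSn !ltnn !eqxx /=.
  by rewrite ltnSn hl.
Qed.

Lemma X_Fin w j i : Xb (rcons w (Fin j)) i = Xb w i.
Proof. by rewrite Xb_rcons orbF. Qed.
Lemma X_Inf w j i : Xb (rcons w (Inf j)) i = Xb w i.
Proof. by rewrite Xb_rcons orbF. Qed.
Lemma X_InfExt w j i : Xb (rcons (rcons w (Inf j)) Ext) i = Xb w i || (i == j).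
Proof. by rewrite Xb_rcons X_Inf last_rcons /= eq_sym. Qed.

Lemma delta_Fin w j i : delta (rcons w (Fin j)) i =
  if Xb w i || (i == j) then delta w i else delta w i - delta w j.
Proof. by rewrite /delta rev_rcons /= revK. Qed.
Lemma delta_Fin_X w j k : Xb w k -> delta (rcons w (Fin j)) k = delta w k.
Proof. by rewrite delta_Fin => ->. Qed.
Lemma delta_Inf w j i : delta (rcons w (Inf j)) i = delta w i.
Proof. by rewrite /delta rev_rcons. Qed.
Lemma delta_Ext w i : delta (rcons w Ext) i = delta w i.
Proof. by rewrite /delta rev_rcons. Qed.

Lemma phi_Fin w j i v : phi (rcons w (Fin j)) i v =
  phi w i v + (i == j)%:R * \sum_(l < n | ~~ Xb w l && (l != j)) phi w l v.
Proof. by rewrite /phi rev_rcons /= revK. Qed.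
Lemma phi_Inf w j i v : phi (rcons w (Inf j)) i v = phi w i v.
Proof. by rewrite /phi rev_rcons. Qed.
Lemma phi_Ext w i v : phi (rcons w Ext) i v = phi w i v.
Proof. by rewrite /phi rev_rcons. Qed.

Lemma B_Fin w j : B (rcons w (Fin j)) = msum (B w) (seg01 (delta w j)).
Proof. by rewrite /B rev_rcons. Qed.
Lemma B_Inf w j : B (rcons w (Inf j)) = msum (B w) (rayN (delta w j)).
Proof. by rewrite /B rev_rcons. Qed.
Lemma B_InfExt w j :
  B (rcons (rcons w (Inf j)) Ext) = msum (B w) (lineZ (delta w j)).
Proof. by rewrite /B !rev_rcons. Qed.

Lemma V_Fin w j : V (rcons w (Fin j)) = V w.
Proof. by rewrite /V rev_rcons. Qed.
Lemma V_Inf w j : V (rcons w (Inf j)) = V w.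
Proof. by rewrite /V rev_rcons. Qed.
Lemma V_InfExt w j :
  V (rcons (rcons w (Inf j)) Ext) = msum (V w) (lineZ (delta w j)).
Proof. by rewrite /V !rev_rcons. Qed.

Lemma admissible_prefix w a : admissible (rcons w a) -> admissible w.
Proof.
have lt_size p : (p < size w)%N -> (p < size (rcons w a))%N.
  by rewrite size_rcons => /ltnW.
have nthE p : (p < size w)%N -> nth Ext (rcons w a) p = nth Ext w p.
  by move=> hp; rewrite nth_rcons hp.
case=> [h1 [h2 h3]]; split; [|split].
- move=> j p q hq hpq; have := h1 j p q (lt_size _ hq) hpq.
  by rewrite (nthE _ hq) (nthE _ (ltn_trans hpq hq)).
- move=> p hp; have := h2 p (lt_size _ hp).
  by rewrite (nthE _ hp) (nthE _ (ltnW hp)).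
- move=> p hp; rewrite -(nthE _ hp) => /(h3 p (lt_size _ hp))[p' ep hi].
  have hp' : (p' < size w)%N by rewrite -ltnS -ep ltnW.
  by exists p' => //; rewrite -(nthE _ hp').
Qed.

Lemma admissible_last_notX w a j :
  admissible (rcons w a) -> is_Fin j a || is_Inf j a -> ~~ Xb w j.
Proof.
case=> [h1 _] ha; apply/negP => /XbP[p /and3P[hp hi _]].
have := h1 j p (size w); rewrite size_rcons ltnSn !nth_rcons ltnn eqxx (ltnW hp).
by case/(_ isT isT hi) => /negbTE e1 /negbTE e2; rewrite e1 e2 in ha.
Qed.

Lemma admissible_last_Ext w :
  admissible (rcons w Ext) -> exists w' j, w = rcons w' (Inf j).
Proof.
case=> [_ [_ h3]].
have [||p' ep] := h3 (size w); rewrite ?size_rcons ?nth_rcons ?ltnn ?eqxx //.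
clear h3; case/lastP: w ep => [|w' x] //; rewrite size_rcons => -[ep].
rewrite -ep ltnSn nth_rcons ltnn eqxx.
by case: x => // j _; exists w', j.
Qed.

Definition coord_expansion w := forall v, v = \sum_i delta w i *~ phi w i v.
Definition coord_dual w := forall i k, phi w i (delta w k) = (i == k)%:R.

Definition Ycone w v := forall i, ~~ Xb w i -> 0 <= phi w i v.

Record good w : Prop := Good {
  good_expansion : coord_expansion w;
  good_dual : coord_dual w;
  good_B_cone : forall v, B w v -> Ycone w v;
  good_V_span : forall v, V w v <-> spanX w v;
  good_span_B : forall v, spanX w v -> B w v }.

Lemma good_nil : good [::].
Proof.
split.
- move=> v; rewrite {1}[v]row_sum_delta; apply: eq_bigr => i _.
  by rewrite -scaler_int intz.
- by move=> i k; rewrite /phi /delta /= mxE eqxx eq_sym.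
- by move=> v -> i _; rewrite /phi /= mxE.
- move=> v; split; first by move=> ->; exists (fun _ => 0); rewrite big_pred0.
  by move=> [c ->]; rewrite big_pred0.
- by move=> v [c ->]; rewrite big_pred0.
Qed.

Lemma Ycone_add w u v : Ycone w u -> Ycone w v -> Ycone w (u + v).
Proof. by move=> hu hv i hi; rewrite raddfD addr_ge0 ?hu ?hv. Qed.

Lemma Ycone_delta w j k : coord_dual w -> Ycone w (delta w j *+ k).
Proof. by move=> hdual i _; rewrite raddfMn hdual mulrn_wge0 ?ler0n. Qed.

Lemma spanX_congr w w' :
  Xb w' =1 Xb w -> (forall k, Xb w k -> delta w' k = delta w k) ->
  forall v, spanX w' v <-> spanX w v.
Proof.
move=> eX edelta v.
have es c : \sum_(k < n | Xb w' k) delta w' k *~ c k =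
            \sum_(k < n | Xb w k) delta w k *~ c k.
  by rewrite (eq_bigl _ _ eX); apply: eq_bigr => k /edelta->.
by split=> -[c ->]; exists c; rewrite es.
Qed.

Lemma spanX_opp w v : spanX w v -> spanX w (- v).
Proof.
case=> c ->; exists (fun k => - c k).
by rewrite -sumrN; apply: eq_bigr => k _; rewrite mulrNz.
Qed.

Lemma msum_sub (A A' C : vset n) :
  (forall v, A v -> A' v) -> forall v, msum A C v -> msum A' C v.
Proof. by move=> sAA' v [a [c [Aa [Cc ->]]]]; exists a, c; split; first exact: sAA'. Qed.

Lemma msum_0r (A C : vset n) v : C 0 -> A v -> msum A C v.
Proof. by move=> C0 Av; exists v, 0; rewrite addr0. Qed.

(* The terms -phi^i(v) delta^j subtracted for i in Y \ {j} are exactly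
   compensated by the increase of phi^j(v). *)
Lemma expansion_Fin w j : coord_expansion w -> coord_expansion (rcons w (Fin j)).
Proof.
move=> hexp v; set S := \sum_(l < n | ~~ Xb w l && (l != j)) phi w l v.
have step i : delta (rcons w (Fin j)) i *~ phi (rcons w (Fin j)) i v =
    delta w i *~ phi w i v +
    delta w j *~ ((i == j)%:R * S - (~~ Xb w i && (i != j))%:R * phi w i v).
  rewrite delta_Fin phi_Fin -/S; have [->|nij] := eqVneq i j.
    by rewrite orbT /= mul1r andbF mul0r subr0 mulrzDr.
  rewrite mul0r addr0 sub0r andbT orbF.
  by case: (Xb w i); rewrite /= ?mul0r ?oppr0 ?mulr0z ?addr0 // mul1r mulrNz mulrzBl.
have sum_j : \sum_(i < n) (i == j)%:R * S = S.
  by rewrite (bigD1 j) //= eqxx mul1r big1 ?addr0 // => i /negbTE->; rewrite mul0r.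
have sum_Y : \sum_(i < n) (~~ Xb w i && (i != j))%:R * phi w i v = S.
  rewrite /S [RHS]big_mkcond; apply: eq_bigr => i _.
  by case: ifP; rewrite ?mul1r ?mul0r.
rewrite (eq_bigr _ (fun i _ => step i)) big_split /= -hexp -mulrz_sumr sumrB.
by rewrite sum_j sum_Y subrr mulr0z addr0.
Qed.

Lemma dual_Fin w j : coord_dual w -> coord_dual (rcons w (Fin j)).
Proof.
move=> hdual i k; rewrite delta_Fin phi_Fin; case: ifPn => [hk|].
  rewrite hdual big1 ?mulr0 ?addr0 // => l /andP[yl lj].
  rewrite hdual; have [elk|//] := eqVneq l k.
  by move: hk; rewrite -elk (negbTE yl) (negbTE lj).
rewrite negb_or => /andP[yk kj]; rewrite !raddfB !hdual.
rewrite (eq_bigr (fun l => (l == k)%:R - (l == j)%:R)) => [|l _]; last first.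
  by rewrite raddfB !hdual.
rewrite sumrB (bigD1 k) /=; last by rewrite yk kj.
rewrite eqxx !big1 => [|l /andP[_ /negbTE->]|l /andP[_ /negbTE->]] //.
by rewrite mulr1n addr0 subr0 mulr1 subrK.
Qed.

(* Since phi^j only gains a sum of Y-coordinates, the cone can only grow. *)
Lemma Ycone_Fin w j v : Ycone w v -> Ycone (rcons w (Fin j)) v.
Proof.
move=> hv i; rewrite X_Fin phi_Fin => hi; rewrite addr_ge0 ?hv //.
by rewrite mulr_ge0 ?ler0n // sumr_ge0 // => l /andP[hl _]; apply: hv.
Qed.

Lemma good_Fin w j : good w -> good (rcons w (Fin j)).
Proof.
case=> hexp hdual hB hV hspanB.
have hspan := spanX_congr (X_Fin w j) (fun k hk => delta_Fin_X j hk).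
split.
- exact: expansion_Fin.
- exact: dual_Fin.
- move=> v; rewrite B_Fin => -[b [d [Bb [Dd ->]]]].
  apply/Ycone_Fin/Ycone_add; first exact: hB.
  by case: Dd => ->; [rewrite -(mulr0n (delta w j)) | rewrite -(mulr1n (delta w j))];
    apply: Ycone_delta.
- by move=> v; rewrite V_Fin; apply: iff_trans (hV v) (iff_sym (hspan v)).
- by move=> v /hspan/hspanB Bv; rewrite B_Fin; apply: msum_0r => //; left.
Qed.

Lemma Ycone_Inf w j v : Ycone w v -> Ycone (rcons w (Inf j)) v.
Proof. by move=> hv i; rewrite X_Inf phi_Inf; apply: hv. Qed.

Lemma good_Inf w j : good w -> good (rcons w (Inf j)).
Proof.
case=> hexp hdual hB hV hspanB.
have hspan := spanX_congr (X_Inf w j) (fun k _ => delta_Inf w j k).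
split.
- by move=> v; rewrite {1}(hexp v); apply: eq_bigr => i _; rewrite delta_Inf phi_Inf.
- by move=> i k; rewrite delta_Inf phi_Inf hdual.
- move=> v; rewrite B_Inf => -[b [d [Bb [[k ->] ->]]]].
  by apply/Ycone_Inf/Ycone_add; [exact: hB | exact: Ycone_delta].
- by move=> v; rewrite V_Inf; apply: iff_trans (hV v) (iff_sym (hspan v)).
- by move=> v /hspan/hspanB Bv; rewrite B_Inf; apply: msum_0r => //; exists 0%N.
Qed.

Lemma spanX_InfExt w j v : ~~ Xb w j ->
  spanX (rcons (rcons w (Inf j)) Ext) v <-> msum (spanX w) (lineZ (delta w j)) v.
Proof.
move=> hj; set w' := rcons (rcons w (Inf j)) Ext.
have dE k : delta w' k = delta w k by rewrite delta_Ext delta_Inf.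
have sumE c : \sum_(k < n | Xb w' k) delta w' k *~ c k =
    \sum_(k < n | Xb w k) delta w k *~ c k + delta w j *~ c j.
  rewrite (bigD1 j) /=; last by rewrite X_InfExt eqxx orbT.
  rewrite addrC dE; congr (_ + _); apply: eq_big => [k|k _]; last by rewrite dE.
  by rewrite X_InfExt; case: eqVneq => [->|]; rewrite ?(negbTE hj) ?orbF ?andbT.
split=> [[c ->]|[u [d [[c ->] [[k ->] ->]]]]].
  rewrite sumE; exists (\sum_(k < n | Xb w k) delta w k *~ c k), (delta w j *~ c j).
  by split; [exists c | split; first exists (c j)].
exists (fun l => if l == j then k else c l); rewrite sumE eqxx; congr (_ + _).
apply: eq_bigr => l hl; case: eqVneq => // elj.
by move: hl; rewrite elj (negbTE hj).
Qed.

Lemma good_InfExt w j : good w -> ~~ Xb w j -> good (rcons (rcons w (Inf j)) Ext).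
Proof.
case=> hexp hdual hB hV hspanB hj.
split.
- move=> v; rewrite {1}(hexp v); apply: eq_bigr => i _.
  by rewrite delta_Ext delta_Inf phi_Ext phi_Inf.
- by move=> i k; rewrite delta_Ext delta_Inf phi_Ext phi_Inf hdual.
- move=> v; rewrite B_InfExt => -[b [d [Bb [[k ->] ->]]]] i.
  rewrite X_InfExt negb_or phi_Ext phi_Inf raddfD raddfMz hdual.
  by case/andP=> hi /negbTE->; rewrite mul0rz addr0; apply: hB.
- move=> v; rewrite V_InfExt; apply: iff_trans (iff_sym (spanX_InfExt v hj)).
  by split; apply: msum_sub => u /hV.
- by move=> v /(spanX_InfExt v hj); rewrite B_InfExt; apply: msum_sub.
Qed.

Lemma good_admissible w : admissible w -> good w.
Proof.
have [N] := ubnP (size w); elim: N w => // N IH w.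
case/lastP: w => [|w a] hsize hw; first exact: good_nil.
rewrite size_rcons ltnS in hsize; have hw' := admissible_prefix hw.
case: a hw => [j|j|] hw.
- exact/good_Fin/IH.
- exact/good_Inf/IH.
- have [w' [j ew]] := admissible_last_Ext hw; subst w.
  rewrite size_rcons in hsize; apply: good_InfExt.
    exact: IH (ltnW hsize) (admissible_prefix hw').
  by apply: (admissible_last_notX hw'); rewrite /= eqxx.
Qed.

Lemma span_of_BZ w v : good w -> B w v -> B w (- v) -> spanX w v.
Proof.
case=> hexp _ hB _ _ Bv Bnv; exists (fun k => phi w k v).
rewrite {1}(hexp v) (bigID (fun k => Xb w k)) /= [X in _ + X]big1 ?addr0 // => i hi.
have le0 : phi w i v <= 0 by rewrite -oppr_ge0 -raddfN; apply: hB.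
have phi0 : phi w i v = 0 by apply/eqP; rewrite eq_le le0 (hB _ Bv i hi).
by rewrite phi0 mulr0z.
Qed.
End AdmissibleWords.

Theorem mainTheorem12 (n : nat) (w : word n) :
  admissible w ->
  (forall v : 'rV[int]_n, V w v <-> (B w v /\ Zset w v)) /\
  (forall v : 'rV[int]_n, V w v <-> spanX w v).
Proof.
move=> hw; have G := good_admissible hw.
split=> v; last exact: good_V_span.
split=> [/(good_V_span G) Sv | [Bv Zv]].
- by split; apply: (good_span_B G); last exact: spanX_opp.
- by apply/(good_V_span G); apply: span_of_BZ.
Qed.
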